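(* Let $T$ be a Fano tetrahedron in $\mathbb{Z}^3$ with vertices $x_1=(1,0,0)$, $x_2=(0,1,0)$, $x_3=(k''\lambda_4-a\lambda_1,\ k'\lambda_4-a\lambda_2,\ k\lambda_4)$, $x_4=(-k''\lambda_3-b\lambda_1,\ -k'\lambda_3-b\lambda_2,\ -k\lambda_3)$, where $\lambda_1\le\cdots\le\lambda_4$ are non-negative integers with $\gcd(\lambda_1,\ldots,\lambda_4)=1$ and $\sum_i\lambda_ix_i=0$, $a,b\in\mathbb{Z}$ with $a>0$ and $a\lambda_3+b\lambda_4=1$, and $k,k',k''\in\mathbb{N}$ with $0\le k''\lambda_4-a\lambda_1<k\lambda_4$ and $0\le k'\lambda_4-a\lambda_2<k\lambda_4$. Then $$0\le k\lambda_3-k''\lambda_3-b\lambda_1<k\lambda_3\quad\text{and}\quad 0\le k\lambda_3-k'\lambda_3-b\lambda_2<k\lambda_3,$$ and one of these lower inequalities is an equality only if $\lambda_3=1$; in that case $T$ is equivalent under $GL(3,\mathbb{Z})$ either to the tetrahedron with vertices $e_1,e_2,e_3,-e_1-e_2-e_3$ or to the tetrahedron with vertices $(1,0,0),(0,1,0),(1,1,2),(-1,-1,-1)$.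
   Context: A tetrahedron is called Fano if its vertices lie in $\mathbb{Z}^3$ and the only lattice point it contains other than its vertices is the origin, which lies strictly in its interior. $e_1,e_2,e_3$ is the standard basis of $\mathbb{Z}^3$. *)

From HB Require Import structures.
From mathcomp Require Import all_boot all_order all_algebra all_fingroup.
Set Implicit Arguments. Unset Strict Implicit. Unset Printing Implicit Defensive.
Import Order.TTheory GRing.Theory Num.Theory.
Local Open Scope ring_scope.

Definition vec3 := 'cV[int]_3.

Definition mkv (a b c : int) : vec3 := \col_(i < 3) nth 0 [:: a; b; c] i.

Definition tet (x1 x2 x3 x4 : vec3) : 'I_4 -> vec3 :=
  fun i => nth 0 [:: x1; x2; x3; x4] i.

Definition toQ (v : vec3) : 'cV[rat]_3 := map_mx (fun z : int => z%:~R) v.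

Definition in_conv (V : 'I_4 -> vec3) (p : 'cV[rat]_3) : Prop :=
  exists t : 'I_4 -> rat,
    (forall i, 0 <= t i) /\ \sum_i t i = 1 /\ \sum_i t i *: toQ (V i) = p.

Definition nondegenerate (V : 'I_4 -> vec3) : Prop :=
  \det (\matrix_(i < 3, j < 3) (V (lift ord0 j) i ord0 - V ord0 i ord0)) != 0.

Definition in_interior (V : 'I_4 -> vec3) (p : 'cV[rat]_3) : Prop :=
  nondegenerate V /\
  exists t : 'I_4 -> rat,
    (forall i, 0 < t i) /\ \sum_i t i = 1 /\ \sum_i t i *: toQ (V i) = p.

Definition fano (V : 'I_4 -> vec3) : Prop :=
  in_interior V 0 /\
  forall p : vec3, in_conv V (toQ p) -> p = 0 \/ exists i, p = V i.

Definition GL3Z_equiv (V W : 'I_4 -> vec3) : Prop :=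
  exists M : 'M[int]_3, (\det M = 1 \/ \det M = -1) /\
  exists s : {perm 'I_4}, forall i, M *m V i = W (s i).

(* Write x3 = (c, c', k l4) and x4 = (d, d', -n) with n = k l3.  Comparing a
   positive barycentric representation of the origin with the first coordinate
   and the height of the relation l1 x1 + l3 x3 + l4 x4 = 0 forces l1 > 0, and
   the identity l4 (n + d) = l3 (k l4 - c) - l1 then gives 0 <= n + d < n;
   likewise for d'.
   As the origin lies in T, so does every nonnegative combination of the
   vertices of total weight at most 1.  If n + d = 0 and n > 1, the lattice point
   (-1, r, -1) = x4 / n + (r - d' / n) e2, with r = -1 if d' = -n and r = 0
   otherwise, is such a combination but neither the origin nor a vertex, against
   the Fano property.  So n = 1, which forces k = l1 = l2 = l3 = 1,
   x4 = (-1, -1, -1) and x3 = (l4 - 1, l4 - 1, l4); finally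
   (1, 1, 1) = (e1 + e2 + x3) / l4 rules out l4 >= 3 in the same way. *)
From HB Require Import structures.
From mathcomp Require Import all_boot all_order all_algebra all_fingroup.
From mathcomp Require Import zify ring.
Set Implicit Arguments. Unset Strict Implicit. Unset Printing Implicit Defensive.
Import Order.TTheory GRing.Theory Num.Theory.
Local Open Scope ring_scope.

Lemma tet_combE (x1 x2 x3 x4 : vec3) (t : 'I_4 -> rat) (j : 'I_3) :
  (\sum_i t i *: toQ (tet x1 x2 x3 x4 i)) j 0 =
  t 0 * (x1 j 0)%:~R + t 1 * (x2 j 0)%:~R + t 2 * (x3 j 0)%:~R + t 3 * (x4 j 0)%:~R.
Proof.
rewrite summxE !big_ord_recl big_ord0 !mxE addr0 !addrA.
have o1 : lift ord0 ord0 = 1 :> 'I_4 by apply: val_inj.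
have o2 : lift ord0 (lift ord0 ord0) = 2 :> 'I_4 by apply: val_inj.
have o3 : lift ord0 (lift ord0 (lift ord0 ord0)) = 3 :> 'I_4 by apply: val_inj.
by rewrite o3 o2 o1.
Qed.

Lemma mkvE (a b c : int) (j : 'I_3) : mkv a b c j 0 = nth 0 [:: a; b; c] j.
Proof. by rewrite mxE. Qed.

Lemma in_conv_cone (V : 'I_4 -> vec3) (s : 'I_4 -> rat) :
  in_conv V 0 -> (forall i, 0 <= s i) -> \sum_i s i <= 1 ->
  in_conv V (\sum_i s i *: toQ (V i)).
Proof.
case=> mu [mu_ge0 [mu_sum mu_comb]] s_ge0 s_sum.
exists (fun i => s i + (1 - \sum_j s j) * mu i); split; [|split].
- by move=> i; rewrite addr_ge0 ?mulr_ge0 ?subr_ge0.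
- by rewrite big_split /= -mulr_sumr mu_sum mulr1 addrC subrK.
- under eq_bigr do rewrite scalerDl -scalerA.
  by rewrite big_split /= -scaler_sumr mu_comb scaler0 addr0.
Qed.

Lemma fano_lattice_cone (V : 'I_4 -> vec3) (n : int) (w : 'I_4 -> int) (p : vec3) :
  fano V -> 0 < n -> (forall i, 0 <= w i) -> \sum_i w i <= n ->
  n *: p = \sum_i w i *: V i -> p = 0 \/ exists i, p = V i.
Proof.
case=> [[_ [t [t_gt0 t_conv]]] lattice] n_gt0 w_ge0 w_sum comb.
have nQ_gt0 : (0 : rat) < n%:~R by rewrite ltr0z.
apply: lattice.
have -> : toQ p = \sum_i ((w i)%:~R / n%:~R) *: toQ (V i).
  apply/matrixP => j z; rewrite (ord1 z) summxE.
  have := congr1 (fun M : vec3 => (M j 0)%:~R : rat) comb.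
  rewrite !mxE summxE rmorph_sum intrM /= => nE.
  rewrite -[LHS](mulKf (lt0r_neq0 nQ_gt0)) nE mulr_sumr.
  by apply: eq_bigr => i _; rewrite !mxE intrM mulrCA mulrA.
apply: in_conv_cone.
- by exists t; split=> // i; apply: ltW.
- by move=> i; rewrite divr_ge0 ?ler0z // ltW.
- by rewrite -mulr_suml ler_pdivrMr // mul1r -rmorph_sum /= ler_int.
Qed.

Lemma GL3Z_equiv_refl (V : 'I_4 -> vec3) : GL3Z_equiv V V.
Proof.
exists 1%:M; split; first by left; rewrite det1.
by exists 1%g => i; rewrite mul1mx perm1.
Qed.

Lemma shifted_coord_bounds (l l3 l4 k c d : int) :
  0 < l <= l3 -> 0 < l4 -> 0 <= c < k * l4 -> l + l3 * c + l4 * d = 0 ->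
  0 <= k * l3 + d < k * l3.
Proof.
move=> /andP[l_gt0 l_le3] l4_gt0 /andP[c_ge0 c_lt] rel.
have shiftE : l4 * (k * l3 + d) = l3 * (k * l4 - c) - l by lia.
have lower : l <= l3 * (k * l4 - c) by nia.
have upper : l3 * (k * l4 - c) <= l4 * (k * l3) by nia.
apply/andP; split; nia.
Qed.

Section FanoTetrahedron.

Variables l1 l2 l3 l4 k c c' d d' : int.

Let T := tet (mkv 1 0 0) (mkv 0 1 0) (mkv c c' (k * l4)) (mkv d d' (- (k * l3))).

Hypothesis fanoT : fano T.
Hypotheses (l1_ge0 : 0 <= l1) (l1_le2 : l1 <= l2) (l2_le3 : l2 <= l3) (l3_le4 : l3 <= l4).
Hypotheses (rel1 : l1 + l3 * c + l4 * d = 0) (rel2 : l2 + l3 * c' + l4 * d' = 0).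
Hypotheses (c_bounds : 0 <= c < k * l4) (c'_bounds : 0 <= c' < k * l4).

Lemma k_l4_gt0 : 0 < k /\ 0 < l4.
Proof.
have [c_ge0 c_lt] := andP c_bounds.
have l4_ge0 : 0 <= l4 by lia.
have kl4_gt0 : 0 < k * l4 by lia.
have l4_gt0 : 0 < l4.
  by rewrite lt_def l4_ge0 andbT; apply: contraTneq kl4_gt0 => ->; rewrite mulr0.
by rewrite -(pmulr_lgt0 _ l4_gt0).
Qed.

Lemma l1_gt0 : 0 < l1.
Proof.
have [k_gt0 l4_gt0] := k_l4_gt0.
case: fanoT => [[_ [t [t_gt0 [_ t_comb]]]] _].
have coord (j : 'I_3) := congr1 (fun M : 'cV[rat]_3 => M j 0) t_comb.
have := coord 2; have := coord 0; rewrite !tet_combE !mxE /=.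
rewrite ?(rmorph0, rmorph1, intrM, intrN, mulr0, mulr1, add0r, addr0) => E1 E3.
have rel1Q : l1%:~R + l3%:~R * c%:~R + l4%:~R * d%:~R = 0 :> rat.
  by have := congr1 (fun z : int => z%:~R : rat) rel1; rewrite !intrD !intrM.
have kQ_neq0 : k%:~R != 0 :> rat by rewrite intr_eq0 gt_eqF.
have balance : t 2 * l4%:~R = t 3 * l3%:~R.
  have : k%:~R * (t 2 * l4%:~R - t 3 * l3%:~R) = 0 by rewrite -E3; ring.
  by move/eqP; rewrite mulf_eq0 (negbTE kQ_neq0) subr_eq0 => /eqP.
have l3Q_gt0 : 0 < l3%:~R :> rat.
  by rewrite -(pmulr_rgt0 _ (t_gt0 3)) -balance mulr_gt0 ?ltr0z.
have weights_prop : l3%:~R * t 0 = l1%:~R * t 2.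
  apply/eqP; rewrite -subr_eq0; apply/eqP.
  transitivity (l3%:~R * (t 0 + t 2 * c%:~R + t 3 * d%:~R)
    - t 2 * (l1%:~R + l3%:~R * c%:~R + l4%:~R * d%:~R)
    + d%:~R * (t 2 * l4%:~R - t 3 * l3%:~R)); first ring.
  by rewrite E1 rel1Q balance subrr !mulr0 subrr.
suff : 0 < l1%:~R :> rat by rewrite ltr0z.
by rewrite -(pmulr_lgt0 _ (t_gt0 2)) -weights_prop mulr_gt0.
Qed.

Lemma x4_shifted_bounds :
  0 <= k * l3 + d < k * l3 /\ 0 <= k * l3 + d' < k * l3.
Proof.
have [_ l4_gt0] := k_l4_gt0.
have l1_pos := l1_gt0.
split; [apply: (@shifted_coord_bounds l1 l3 l4 k c) |
        apply: (@shifted_coord_bounds l2 l3 l4 k c')] => //; lia.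
Qed.

Lemma no_lattice_point_at_height (n : int) (w : 'I_4 -> int) (p : vec3) :
  0 < n -> (forall i, 0 <= w i) -> \sum_i w i <= n -> n *: p = \sum_i w i *: T i ->
  p 2 0 != 0 -> p 2 0 != k * l4 -> p 2 0 != - (k * l3) -> False.
Proof.
move=> n_gt0 w_ge0 w_sum comb; case: (fano_lattice_cone fanoT n_gt0 w_ge0 w_sum comb).
  by move=> ->; rewrite mxE eqxx.
by case=> [[[|[|[|[|//]]]] ?]] ->; rewrite mkvE /= ?eqxx.
Qed.

Lemma x4_height_eq1 : k * l3 + d = 0 \/ k * l3 + d' = 0 -> k * l3 = 1.
Proof.
have [/andP[d_ge d_lt] /andP[d'_ge d'_lt]] := x4_shifted_bounds.
set n := k * l3 in d_ge d_lt d'_ge d'_lt *.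
move=> corner; suff : ~ 1 < n by lia.
move=> n_gt1.
pose r (e : int) : int := if e == - n then -1 else 0.
pose w (i : 'I_4) := nth 0 [:: r d * n - d; r d' * n - d'; 0; 1] i.
apply: (@no_lattice_point_at_height n w (mkv (r d) (r d') (-1))); rewrite ?mkvE //=; try lia.
- by case=> [[|[|[|[|//]]]] ?] /=; rewrite /w /r /=; try case: eqP; lia.
- by rewrite !big_ord_recl big_ord0 /w /r /=; do 2!case: eqP; lia.
- apply/matrixP => j z; rewrite (ord1 z) !mxE summxE !big_ord_recl big_ord0 /= !mxE.
  by case: j => [[|[|[|//]]] ?]; rewrite /w /n /=; ring.
Qed.

Lemma tet_equality_case :
  k * l3 + d = 0 \/ k * l3 + d' = 0 ->
  l3 = 1 /\
  (GL3Z_equiv T (tet (mkv 1 0 0) (mkv 0 1 0) (mkv 0 0 1) (mkv (-1) (-1) (-1))) \/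
   GL3Z_equiv T (tet (mkv 1 0 0) (mkv 0 1 0) (mkv 1 1 2) (mkv (-1) (-1) (-1)))).
Proof.
move=> corner; have n1 := x4_height_eq1 corner.
have [k_gt0 _] := k_l4_gt0.
have l1_pos := l1_gt0.
have [k1 l3_1] : k = 1 /\ l3 = 1 by split; nia.
have [l1_1 l2_1] : l1 = 1 /\ l2 = 1 by lia.
have [d_bounds d'_bounds] := x4_shifted_bounds.
rewrite n1 in d_bounds d'_bounds.
have [d_eq d'_eq] : d = -1 /\ d' = -1 by lia.
have c_eq : c = l4 - 1.
  by move: rel1; rewrite l1_1 l3_1 d_eq; lia.
have c'_eq : c' = l4 - 1.
  by move: rel2; rewrite l2_1 l3_1 d'_eq; lia.
have l4_le2 : l4 <= 2.
  rewrite leNgt; apply/negP => l4_gt2.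
  apply: (@no_lattice_point_at_height l4 (fun i => nth 0 [:: 1; 1; 1; 0] i) (mkv 1 1 1));
    rewrite ?mkvE //=; try lia.
  - by case=> [[|[|[|[|//]]]] ?].
  - by rewrite !big_ord_recl big_ord0 /=; lia.
  - apply/matrixP => j z; rewrite (ord1 z) !mxE summxE !big_ord_recl big_ord0 /= !mxE.
    by case: j => [[|[|[|//]]] ?]; rewrite /= ?c_eq ?c'_eq ?k1; ring.
split=> //; rewrite /T c_eq c'_eq d_eq d'_eq k1 l3_1 !mul1r.
have [->|->] : l4 = 1 \/ l4 = 2 by lia.
- by left; apply: GL3Z_equiv_refl.
- by right; apply: GL3Z_equiv_refl.
Qed.

End FanoTetrahedron.

Theorem proposition3p5 (l1 l2 l3 l4 a b k k' k'' : int) :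
  let x1 := mkv 1 0 0 in
  let x2 := mkv 0 1 0 in
  let x3 := mkv (k'' * l4 - a * l1) (k' * l4 - a * l2) (k * l4) in
  let x4 := mkv (- (k'' * l3) - b * l1) (- (k' * l3) - b * l2) (- (k * l3)) in
  fano (tet x1 x2 x3 x4) ->
  0 <= l1 -> l1 <= l2 -> l2 <= l3 -> l3 <= l4 ->
  gcdz (gcdz (gcdz l1 l2) l3) l4 = 1 ->
  l1 *: x1 + l2 *: x2 + l3 *: x3 + l4 *: x4 = 0 ->
  0 < a -> a * l3 + b * l4 = 1 ->
  0 <= k -> 0 <= k' -> 0 <= k'' ->
  0 <= k'' * l4 - a * l1 < k * l4 ->
  0 <= k' * l4 - a * l2 < k * l4 ->
  [/\ 0 <= k * l3 - k'' * l3 - b * l1 < k * l3,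
      0 <= k * l3 - k' * l3 - b * l2 < k * l3 &
      (k * l3 - k'' * l3 - b * l1 = 0 \/ k * l3 - k' * l3 - b * l2 = 0) ->
      l3 = 1 /\
      (GL3Z_equiv (tet x1 x2 x3 x4)
         (tet (mkv 1 0 0) (mkv 0 1 0) (mkv 0 0 1) (mkv (-1) (-1) (-1))) \/
       GL3Z_equiv (tet x1 x2 x3 x4)
         (tet (mkv 1 0 0) (mkv 0 1 0) (mkv 1 1 2) (mkv (-1) (-1) (-1))))].
Proof.
move=> x1 x2 x3 x4 fanoT l1_ge0 l1_le2 l2_le3 l3_le4 _ _ _ bezout _ _ _ c_bnd c'_bnd.
have rel (l k0 : int) : l + l3 * (k0 * l4 - a * l) + l4 * (- (k0 * l3) - b * l) = 0.
  by rewrite -{1}[l]mulr1 -bezout; ring.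
have shiftE (k0 l : int) : k * l3 - k0 * l3 - b * l = k * l3 + (- (k0 * l3) - b * l).
  by ring.
rewrite !shiftE.
have [bounds bounds'] := x4_shifted_bounds fanoT l1_ge0 l1_le2 l2_le3 l3_le4
  (rel _ _) (rel _ _) c_bnd c'_bnd.
split=> //; exact: tet_equality_case fanoT l1_ge0 l1_le2 l2_le3 l3_le4
  (rel _ _) (rel _ _) c_bnd c'_bnd.
Qed.
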